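(* Let $a,b$ be integers with $0<a<b$, let $\gamma_1<\gamma_2<\cdots$ be the greedy dissociated sequence starting from $a,b$, and let $n_0(a,b)$ be the least integer such that $\gamma_n=2\gamma_{n-1}$ for all $n\ge n_0(a,b)$. Then $$n_0(a,b)\le L+2K+5,$$ where $L:=\lceil\log_2(2b+2)\rceil$ and $K:=\lceil\log_2 L\rceil$.
   Context: A set $\mathcal S\subseteq\mathbb N$ is dissociated if all of its finite subsets have different sums. The greedy dissociated sequence starting from $a,b$ is defined by $\gamma_1=a$, $\gamma_2=b$, and for $r\ge 3$, $\gamma_r$ is the smallest integer greater than $\gamma_{r-1}$ such that $\{\gamma_1,\dots,\gamma_r\}$ is dissociated. It is known that $\gamma_n=2\gamma_{n-1}$ for all sufficiently large $n$, so $n_0(a,b)$ is well defined. *)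

From HB Require Import structures.
From mathcomp Require Import all_boot.
From mathcomp Require Import finmap.
Set Implicit Arguments. Unset Strict Implicit. Unset Printing Implicit Defensive.
Local Open Scope fset_scope.

Definition dissociated (A : {fset nat}) : Prop :=
  forall B C : {fset nat}, B `<=` A -> C `<=` A ->
    (\sum_(x <- B) x)%N = (\sum_(x <- C) x)%N -> B = C.

Definition first_terms (g : nat -> nat) (r : nat) : {fset nat} :=
  [fset g i | i in iota 1 r].

(* g (indexed from 1; g 0 is irrelevant) is the greedy dissociated sequence
   starting from a, b:  g 1 = a, g 2 = b, and for r >= 3, g r is the least
   integer > g (r-1) such that {g 1, ..., g r} is dissociated. *)
Definition greedy_dissociated (a b : nat) (g : nat -> nat) : Prop :=
  [/\ g 1 = a, g 2 = b &
      forall r, 3 <= r ->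
        [/\ g r.-1 < g r,
            dissociated (first_terms g r) &
            forall m, g r.-1 < m < g r ->
              ~ dissociated (m |` first_terms g r.-1)]].

(* Write D_r for the set of differences (sum B) - (sum C) of two subsets of
   {g_1, ..., g_r}.  For y not among the g_i, {g_1, ..., g_r, y} is
   dissociated exactly when y is not in D_r; so by greediness every integer strictly
   between g_r and g_(r+1) lies in D_r, while g_(r+1) does not.
   A dissociated r-set has 2^r distinct subset sums, whence r g_r >= 2^r - 1,
   and for r = L + K this forces g_(r+1) >= 2b - 1.  From then on D_(r+1)
   contains [0, g_(r+1)], so each later term g_(s+1) is the least gap M_s of
   D_s.  Consecutive gaps satisfy M_(s+1) >= 2 M_s while S_s - M_s, with
   S_s = g_1 + ... + g_s, does not increase; after K + 1 more steps this gives
   S_s < 2 M_s, and from there on the gap exactly doubles at every step. *)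

From Stdlib Require Import Classical.
From mathcomp Require Import all_boot.
From mathcomp Require Import finmap.
From mathcomp Require Import ssralg ssrint zify.
Set Implicit Arguments.
Unset Strict Implicit.

Local Open Scope fset_scope.
Local Open Scope nat_scope.

Lemma fsubsetU1D1 (K : choiceType) (y : K) (A B : {fset K}) :
  B `<=` y |` A -> B `\ y `<=` A.
Proof. by rewrite fsubDset. Qed.

Lemma fsubsetU1_notin (K : choiceType) (y : K) (A B : {fset K}) :
  B `<=` y |` A -> y \notin B -> B `<=` A.
Proof. by move=> sB yB; rewrite -(mem_fsetD1 yB) fsubsetU1D1. Qed.

Definition fsum (A : {fset nat}) : nat := \sum_(x <- A) x.

Lemma fsumU1 (x : nat) (A : {fset nat}) : x \notin A -> fsum (x |` A) = x + fsum A.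
Proof. exact: big_fsetU1. Qed.

Lemma fsumD1 (x : nat) (A : {fset nat}) : x \in A -> fsum A = x + fsum (A `\ x).
Proof. exact: big_fsetD1. Qed.

Lemma fsum_fsubset (B A : {fset nat}) : B `<=` A -> fsum B <= fsum A.
Proof.
move=> /fsubsetP sBA; apply: uniq_sub_le_big => // m n; exact: leq_addr.
Qed.

Lemma dissociated_fsubset (A B : {fset nat}) :
  A `<=` B -> dissociated B -> dissociated A.
Proof. by move=> sAB dB X Y sXA sYA; apply: dB; apply: fsubset_trans sAB. Qed.

Lemma dissociated_card (A : {fset nat}) : dissociated A -> 2 ^ #|` A| <= (fsum A).+1.
Proof.
move=> dA; rewrite -card_fpowerset.
have /card_in_imfsetP/eqP <- : {in fpowerset A &, injective fsum}.
  by move=> B C; rewrite !fpowersetE; apply: dA.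
have sums_small : [fset fsum B | B in fpowerset A] `<=` [fset x in iota 0 (fsum A).+1].
  apply/fsubsetP => _ /imfsetP [B + ->].
  by rewrite fpowersetE in_fset mem_iota ltnS; apply: fsum_fsubset.
apply: leq_trans (fsubset_leq_card sums_small) _.
by rewrite card_fseq (leq_trans (size_undup _)) ?size_iota.
Qed.

Definition sumdiff (A : {fset nat}) (x : int) : Prop :=
  exists B C, [/\ B `<=` A, C `<=` A & x = (fsum B)%:Z - (fsum C)%:Z]%R.

Lemma sumdiff0 (A : {fset nat}) : sumdiff A 0.
Proof. by exists fset0, fset0; split; rewrite ?fsub0set //; lia. Qed.

Lemma sumdiff_mem (A : {fset nat}) (y : nat) : y \in A -> sumdiff A y.
Proof.
move=> yA; exists [fset y], fset0; rewrite fsub1set fsub0set /fsum big_seq_fset1.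
by split=> //; rewrite big_seq_fset0; lia.
Qed.

Lemma sumdiff_fsubset (A A' : {fset nat}) x :
  A `<=` A' -> sumdiff A x -> sumdiff A' x.
Proof.
move=> sAA' [B [C [sBA sCA ->]]]; exists B, C.
by split=> //; apply: fsubset_trans sAA'.
Qed.

Lemma sumdiff_le (A : {fset nat}) (x : nat) : sumdiff A x -> x <= fsum A.
Proof. by case=> B [C [/fsum_fsubset sBA _ e]]; lia. Qed.

Lemma sumdiffN (A : {fset nat}) x : sumdiff A x -> sumdiff A (- x)%R.
Proof. by case=> B [C [sBA sCA ->]]; exists C, B; split=> //; lia. Qed.

Lemma sumdiffU1 (A : {fset nat}) (y : nat) x :
  y \notin A -> sumdiff A x -> sumdiff (y |` A) (x + y%:Z)%R.
Proof.
move=> yA [B [C [sBA sCA ->]]]; exists (y |` B), C; split.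
- exact: fsetUS.
- exact: fsubset_trans sCA (fsubsetU1 _ _).
- rewrite fsumU1; first lia.
  by apply: contra yA; apply: (fsubsetP sBA).
Qed.

Lemma sumdiffU1P (A : {fset nat}) (y : nat) x :
  y \notin A -> sumdiff (y |` A) x ->
  [\/ sumdiff A x, sumdiff A (x - y%:Z)%R | sumdiff A (x + y%:Z)%R].
Proof.
move=> yA [B [C [sBA sCA ->]]].
have [yB|yB] := boolP (y \in B); have [yC|yC] := boolP (y \in C).
- constructor 1; exists (B `\ y), (C `\ y).
  by rewrite !(fsubsetU1D1 sBA, fsubsetU1D1 sCA) (fsumD1 yB) (fsumD1 yC); split=> //; lia.
- constructor 2; exists (B `\ y), C.
  by rewrite (fsubsetU1D1 sBA) (fsubsetU1_notin sCA yC) (fsumD1 yB); split=> //; lia.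
- constructor 3; exists B, (C `\ y).
  by rewrite (fsubsetU1_notin sBA yB) (fsubsetU1D1 sCA) (fsumD1 yC); split=> //; lia.
- by constructor 1; exists B, C; rewrite (fsubsetU1_notin sBA yB) (fsubsetU1_notin sCA yC).
Qed.

Lemma dissociatedU1 (A : {fset nat}) (y : nat) :
  dissociated A -> y \notin A -> dissociated (y |` A) <-> ~ sumdiff A y.
Proof.
move=> dA yA; split.
- move=> dyA [B [C [sBA sCA e]]].
  have yB : y \in B.
    have -> : B = y |` C.
      apply: dyA; [exact: fsubset_trans sBA (fsubsetU1 _ _) | exact: fsetUS |].
      rewrite -/(fsum B) -/(fsum _) fsumU1; first lia.
      by apply: contra yA; apply: (fsubsetP sCA).
    exact: fset1U1.
  by move/negP: yA; apply; apply: (fsubsetP sBA).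
- move=> ndA B C sB sC; rewrite -/(fsum B) -/(fsum C) => eBC.
  have [yB|yB] := boolP (y \in B); have [yC|yC] := boolP (y \in C).
  + rewrite -(fsetD1K yB) -(fsetD1K yC); congr (_ |` _).
    apply: dA; rewrite ?(fsubsetU1D1 sB, fsubsetU1D1 sC) //.
    change (fsum (B `\ y) = fsum (C `\ y)).
    by move: eBC; rewrite (fsumD1 yB) (fsumD1 yC); lia.
  + case: ndA; exists C, (B `\ y).
    rewrite (fsubsetU1_notin sC yC) (fsubsetU1D1 sB).
    by split=> //; move: eBC; rewrite (fsumD1 yB); lia.
  + case: ndA; exists B, (C `\ y).
    rewrite (fsubsetU1_notin sB yB) (fsubsetU1D1 sC).
    by split=> //; move: eBC; rewrite (fsumD1 yC); lia.
  + by apply: dA; rewrite ?(fsubsetU1_notin sB yB, fsubsetU1_notin sC yC).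
Qed.

Lemma least_counterexample (P : nat -> Prop) N :
  ~ P N -> exists M, ~ P M /\ (forall x, x < M -> P x).
Proof.
elim/ltn_ind: N => N IH notPN.
case: (classic (exists2 x, x < N & ~ P x)) => [[x ltxN notPx] | noneBelow].
  exact: IH ltxN notPx.
exists N; split=> // x ltxN; apply: NNPP => notPx.
by apply: noneBelow; exists x.
Qed.

Section FirstTerms.

Variable g : nat -> nat.

Lemma mem_first_termsP x r :
  reflect (exists2 i, 0 < i <= r & x = g i) (x \in first_terms g r).
Proof.
apply: (iffP idP) => [/imfsetP [i /= + ->]|[i ri ->]].
- by rewrite mem_iota => ri; exists i => //; lia.
- by apply/imfsetP; exists i; rewrite //= mem_iota; lia.
Qed.

Lemma first_terms0 : first_terms g 0 = fset0.
Proof. by apply/fsetP => x; rewrite inE; apply/mem_first_termsP => -[i]; lia. Qed.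

Lemma first_termsS r : first_terms g r.+1 = g r.+1 |` first_terms g r.
Proof.
apply/fsetP => x; apply/mem_first_termsP/fset1UP => [[i ri ->]|].
- have [->|neq] := eqVneq i r.+1; [by left | right].
  by apply/mem_first_termsP; exists i => //; lia.
- case=> [->|/mem_first_termsP [i ri ->]]; [exists r.+1 | exists i] => //; lia.
Qed.

Lemma first_terms_fsubset r s : r <= s -> first_terms g r `<=` first_terms g s.
Proof.
move=> rs; apply/fsubsetP => _ /mem_first_termsP [i ri ->].
by apply/mem_first_termsP; exists i => //; lia.
Qed.

End FirstTerms.

Section Greedy.

Variables (a b : nat) (g : nat -> nat).
Hypotheses (a_lt_b : a < b) (greedy : greedy_dissociated a b g).

Local Notation D r := (sumdiff (first_terms g r)).
Local Notation tsum r := (fsum (first_terms g r)).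

Lemma greedy_lt i j : 0 < i < j -> g i < g j.
Proof.
have [g1 g2 gr] := greedy.
have gS k : 0 < k -> g k < g k.+1.
  case: k => [|[|k]] // _; first by rewrite g1 g2.
  by have [] := gr k.+3 isT.
case/andP=> i_gt0; elim: j => [|j IH] // ltij.
have [<- | i_neq_j] := eqVneq i j; first exact: gS.
by apply: ltn_trans (IH _) (gS _ _); lia.
Qed.

Lemma greedy_le i j : 0 < i <= j -> g i <= g j.
Proof.
case/andP=> i_gt0; rewrite leq_eqVlt => /orP [/eqP <- //|ltij].
by apply: ltnW; apply: greedy_lt; rewrite i_gt0.
Qed.

Lemma notin_first_terms x r : g r < x -> x \notin first_terms g r.
Proof.
move=> ltx; apply/negP => /mem_first_termsP [i ri e].
by have := greedy_le ri; lia.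
Qed.

Lemma term_notin_first_terms r : g r.+1 \notin first_terms g r.
Proof.
apply/negP => /mem_first_termsP [i ri e].
by have := @greedy_lt i r.+1; lia.
Qed.

Lemma tsumS r : tsum r.+1 = g r.+1 + tsum r.
Proof. by rewrite first_termsS fsumU1 ?term_notin_first_terms. Qed.

Lemma tsum_le r : tsum r <= r * g r.
Proof.
elim: r => [|r IH]; first by rewrite first_terms0 /fsum big_seq_fset0.
rewrite tsumS; case: r IH => [|r] IH; first lia.
by have := @greedy_lt r.+1 r.+2; nia.
Qed.

Lemma card_first_terms r : #|` first_terms g r| = r.
Proof.
elim: r => [|r IH]; first by rewrite first_terms0 cardfs0.
by rewrite first_termsS cardfsU1 term_notin_first_terms IH.
Qed.

Lemma dissociated_first_terms r : dissociated (first_terms g r).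
Proof.
have [_ _ gr] := greedy.
have [_ dr _] := gr (maxn r 3) (leq_maxr _ _).
exact: dissociated_fsubset (first_terms_fsubset g (leq_maxl r 3)) dr.
Qed.

Lemma greedy_exp2_le r : 2 ^ r <= r * g r + 1.
Proof.
have := dissociated_card (@dissociated_first_terms r).
by rewrite card_first_terms; have := tsum_le r; lia.
Qed.

Lemma term_notin_sumdiff r : ~ D r (g r.+1).
Proof.
apply/(dissociatedU1 (@dissociated_first_terms r) (term_notin_first_terms r)).
by rewrite -first_termsS; apply: dissociated_first_terms.
Qed.

Lemma sumdiff_between_terms r x : 1 < r -> g r < x < g r.+1 -> D r x.
Proof.
move=> r_gt1 /andP [ltx ltxS]; have [_ _ gr] := greedy.
have [_ _ /(_ x) minimal] := gr r.+1 r_gt1.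
apply: NNPP => notDx; apply: minimal; first by rewrite ltx.
by apply/dissociatedU1; rewrite ?notin_first_terms //; apply: dissociated_first_terms.
Qed.

Lemma sumdiff_from_b r x : 1 < r -> b <= x < g r.+1 -> D r x.
Proof.
have [_ g2 _] := greedy.
elim: r x => [|r IH] // x r_gt1 /andP [le_bx ltxS].
have [->|x_neq] := eqVneq x (g r.+1).
  by apply: sumdiff_mem; rewrite first_termsS fset1U1.
have [ltx|lex] := ltnP x (g r.+1); last first.
  by apply: sumdiff_between_terms => //; lia.
have [r_eq1|r_neq1] := eqVneq r 1; first by subst r; lia.
apply: sumdiff_fsubset (first_terms_fsubset g (leqnSn r)) _.
by apply: IH; lia.
Qed.

Lemma sumdiff_upto_term r x :
  1 < r -> 2 * b - 1 <= g r.+1 -> x <= g r.+1 -> D r.+1 x.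
Proof.
move=> r_gt1 large le_xS.
have [->|x_gt0] := posnP x; first exact: sumdiff0.
have [le_bx|lt_xb] := leqP b x.
  have [->|x_neq] := eqVneq x (g r.+1).
    by apply: sumdiff_mem; rewrite first_termsS fset1U1.
  apply: sumdiff_fsubset (first_terms_fsubset g (leqnSn r)) _.
  by apply: sumdiff_from_b => //; lia.
have /sumdiffN/(sumdiffU1 (term_notin_first_terms r)) : D r (g r.+1 - x)%N.
  by apply: sumdiff_from_b => //; lia.
by rewrite -first_termsS; congr (sumdiff _ _); lia.
Qed.

Definition first_gap r M :=
  [/\ g r < M, forall x : nat, x < M -> D r x & ~ D r M].

Lemma first_gap_exists r : (forall x, x <= g r -> D r x) -> exists M, first_gap r M.
Proof.
move=> upto_gr.
have [|M [notDM belowM]] := @least_counterexample (fun x => D r x) (tsum r).+1.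
  by move/sumdiff_le; lia.
exists M; split=> //; rewrite ltnNge; apply: contra_notN notDM.
exact: upto_gr.
Qed.

Lemma first_gap_term r M : 1 < r -> first_gap r M -> g r.+1 = M.
Proof.
move=> r_gt1 [ltM belowM notDM].
have [ltSM|] := ltnP (g r.+1) M; first by case: (term_notin_sumdiff (belowM _ ltSM)).
rewrite leq_eqVlt => /orP [/eqP //|ltMS].
by case: notDM; apply: sumdiff_between_terms => //; rewrite ltM.
Qed.

Lemma first_gap_cover r M :
  1 < r -> first_gap r M -> forall x, x < 2 * M -> D r.+1 x.
Proof.
move=> r_gt1 gapM x ltx; have termM := first_gap_term r_gt1 gapM.
case: gapM => ltM belowM _.
have [ltxM|leMx] := ltnP x M.
  exact: sumdiff_fsubset (first_terms_fsubset g (leqnSn r)) (belowM _ ltxM).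
have /(sumdiffU1 (term_notin_first_terms r)) : D r (x - M)%N by apply: belowM; lia.
by rewrite -first_termsS termM; congr (sumdiff _ _); lia.
Qed.

Lemma first_gap_succ r M :
  1 < r -> first_gap r M -> exists2 M', 2 * M <= M' & first_gap r.+1 M'.
Proof.
move=> r_gt1 gapM; have termM := first_gap_term r_gt1 gapM.
have cover := first_gap_cover r_gt1 gapM.
have [|M' gapM'] := @first_gap_exists r.+1.
  by move=> x lex; apply: cover; case: gapM; lia.
exists M' => //; case: gapM' => _ _ notDM'.
by rewrite leqNgt; apply: contra_notN notDM'; apply: cover.
Qed.

Lemma first_gap_iter r M k : 1 < r -> first_gap r M ->
  exists M', [/\ first_gap (r + k) M', 2 ^ k * M <= M' & tsum (r + k) + M <= tsum r + M'].
Proof.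
move=> r_gt1 gapM; elim: k => [|k [M' [gapM' leM' tsum_le']]].
  by exists M; rewrite addn0 expn0 mul1n.
have r_gt1' : 1 < r + k by lia.
have [M'' leM'' gapM''] := first_gap_succ r_gt1' gapM'.
exists M''; rewrite addnS expnS tsumS (first_gap_term r_gt1' gapM').
by split=> //; lia.
Qed.

Lemma first_gap_double r M :
  1 < r -> first_gap r M -> tsum r < 2 * M -> first_gap r.+1 (2 * M).
Proof.
move=> r_gt1 gapM small; have termM := first_gap_term r_gt1 gapM.
have cover := first_gap_cover r_gt1 gapM.
case: (gapM) => ltM _ notDM; split=> //; first lia.
rewrite first_termsS => /sumdiffU1P-/(_ (term_notin_first_terms r)).
(* 2M and 3M exceed tsum r, and 2M - M = M is the gap of D r. *)
rewrite termM => -[/sumdiff_le|DM|/sumdiff_le]; try lia.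
by apply: notDM; move: DM; congr (sumdiff _ _); lia.
Qed.

Lemma doubling_from_first_gap r M : 1 < r -> first_gap r M -> tsum r < 2 * M ->
  forall n, r.+1 < n -> g n = 2 * g n.-1.
Proof.
move=> r_gt1 gapM small.
have doubled k : first_gap (r + k) (2 ^ k * M) /\ tsum (r + k) < 2 * (2 ^ k * M).
  elim: k => [|k [gapk smallk]]; first by rewrite addn0 expn0 mul1n.
  have r_gt1' : 1 < r + k by lia.
  rewrite addnS expnS -mulnA tsumS (first_gap_term r_gt1' gapk).
  by split; [apply: first_gap_double | case: gapk; lia].
have term k : g (r + k).+1 = 2 ^ k * M.
  by apply: first_gap_term (proj1 (doubled k)); lia.
move=> n ltn; have -> : n = (r + (n - r.+2).+1).+1 by lia.
by rewrite term /= addnS term expnS mulnA.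
Qed.

Lemma doubling_after r k : 1 < r -> 2 * b - 1 <= g r.+1 -> r <= 2 ^ k ->
  forall n, r + k + 3 <= n -> g n = 2 * g n.-1.
Proof.
move=> r_gt1 large r_small.
have [M gapM] := first_gap_exists (fun x => sumdiff_upto_term (x := x) r_gt1 large).
have [M' [gapM' leM' tsum_leM']] := first_gap_iter k (leqW r_gt1) gapM.
move=> n le_n; apply: (doubling_from_first_gap _ gapM'); try lia.
have := tsum_le r; have := @greedy_le r r.+1; rewrite tsumS in tsum_leM'.
case: gapM => ltM _ _; nia.
Qed.

End Greedy.

Theorem corollary1 (a b : nat) (g : nat -> nat) :
  0 < a -> a < b -> greedy_dissociated a b g ->
  let L := up_log 2 (2 * b + 2) in
  let K := up_log 2 L in
  forall n, L + 2 * K + 5 <= n -> g n = 2 * g n.-1.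
Proof.
(* 0 < a already follows from the dissociativity of {a, b, g 3}. *)
move=> _ a_lt_b greedy L K.
have pow_L : 2 * b + 2 <= 2 ^ L by apply: up_logP.
have pow_K : L <= 2 ^ K by apply: up_logP.
have K_small : K < 2 ^ K by apply: ltn_expl.
have L_gt1 : 1 < L by rewrite -(ltn_exp2l _ _ (ltnSn 1)) expn1; lia.
have large : 2 * b - 1 <= g (L + K).+1.
  have := greedy_exp2_le a_lt_b greedy (L + K).+1.
  rewrite expnS expnD; nia.
move=> n le_n; apply: (doubling_after a_lt_b greedy (k := K.+1) _ large); try lia.
by rewrite expnS; lia.
Qed.
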